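(* For each integer $k\ge 2$ there exists a complete tripartite graph that is uniquely $k$-list colorable. (For instance, $K_{N,N,N}$ with $N=(k-1)\binom{2k-2}{k-1}$ is such a graph.)
   Context: All graphs are finite, simple and undirected. A list assignment $L$ for a graph $G$ assigns to each vertex $v$ a set $L(v)$ of colors; an $L$-coloring is a proper vertex coloring $c$ of $G$ with $c(v)\in L(v)$ for every vertex $v$. A $k$-list assignment is a list assignment with $|L(v)|=k$ for all $v$. $G$ is uniquely $k$-list colorable (U$k$LC) if there exists a $k$-list assignment $L$ such that $G$ has exactly one $L$-coloring. $K_{n_1,\dots,n_r}$ denotes the complete $r$-partite graph with parts of sizes $n_1,\dots,n_r$. *)

From mathcomp Require Import all_boot.
Set Implicit Arguments. Unset Strict Implicit. Unset Printing Implicit Defensive.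

(* A graph on a finite vertex type T is given by an adjacency relation adj
   (for the graphs considered here it is symmetric and irreflexive).
   Colors are natural numbers. *)

Definition k_list_assignment (T : finType) (k : nat) (L : T -> seq nat) : Prop :=
  forall v : T, uniq (L v) /\ size (L v) = k.

Definition L_coloring (T : finType) (adj : rel T) (L : T -> seq nat) (c : T -> nat) : Prop :=
  (forall v : T, c v \in L v) /\ (forall u v : T, adj u v -> c u != c v).

Definition uniquely_k_list_colorable (T : finType) (adj : rel T) (k : nat) : Prop :=
  exists L : T -> seq nat,
    k_list_assignment k L /\
    exists c : T -> nat, L_coloring adj L c /\
      forall c' : T -> nat, L_coloring adj L c' -> forall v, c' v = c v.

(* Complete r-partite graph K_{n_0,...,n_{r-1}}: vertices are pairs (i, j) with
   i a part index and j < n i; two vertices are adjacent iff they lie in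
   different parts. *)
Definition cmp_vertex (r : nat) (n : 'I_r -> nat) : finType := {i : 'I_r & 'I_(n i)}.

Definition cmp_adj (r : nat) (n : 'I_r -> nat) : rel (cmp_vertex n) :=
  fun u v => tag u != tag v.

From mathcomp Require Import all_boot zify.

(* Take r >= 3 parts and k = p + 1.  Colours 0 .. rp-1 are distributed among the
   parts by residue mod r, so each part "owns" p colours.  For every part i,
   every owned colour t and every set T of colours, part i has a vertex whose
   list is t followed by p colours of T not owned by i; in the intended
   colouring each vertex takes its owned colour.  In any other colouring, the
   colour sets used by the parts are pairwise disjoint; a part that misses one
   of its own colours t uses more than p colours, since otherwise the vertex
   with list t followed by p foreign colours it does not use could not be
   coloured.  Counting colours then forces every part to use all its own
   colours, so a foreign colour on part i would clash with its owner. *)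

Set Implicit Arguments.
Unset Strict Implicit.
Unset Printing Implicit Defensive.

Lemma leq_sum_card_disjoint (I T : finType) (S : I -> {set T}) :
  (forall i j, i != j -> [disjoint S i & S j]) -> \sum_i #|S i| <= #|T|.
Proof.
move=> disjS.
have -> : \sum_i #|S i| = \sum_(x : T) #|[set i | x \in S i]|.
  under eq_bigr do rewrite -sum1_card big_mkcond.
  by rewrite exchange_big; apply: eq_bigr => x _; rewrite -sum1dep_card [RHS]big_mkcond.
rewrite -[#|T|]sum1_card; apply: leq_sum => x _.
apply/card_le1_eqP => i j; rewrite !inE => xi xj; apply/eqP/negPn/negP => ij.
by have := disjS _ _ ij; rewrite disjoints_subset => /subsetP/(_ x xj); rewrite inE xi.
Qed.

Section Construction.

Variables r p : nat.
Hypothesis r_gt2 : 2 < r.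

Lemma owned_color_proof (i : 'I_r) (t : 'I_p) : r * t + i < r * p.
Proof. have := ltn_ord i; have := ltn_ord t; nia. Qed.

Definition owned_color (i : 'I_r) (t : 'I_p) : 'I_(r * p) :=
  Ordinal (owned_color_proof i t).

Lemma owned_color_mod i t : owned_color i t %% r = i.
Proof. by rewrite /= mulnC modnMDl modn_small. Qed.

Definition owned (i : 'I_r) : {set 'I_(r * p)} := [set owned_color i t | t : 'I_p].

Lemma mem_owned i x : (x \in owned i) = (x %% r == i).
Proof.
apply/imsetP/eqP => [[t _ ->] | x_mod]; first exact: owned_color_mod.
have x_div : x %/ r < p by rewrite ltn_divLR ?[p * r]mulnC ?ltn_ord //; lia.
exists (Ordinal x_div) => //; apply: val_inj => /=.
by rewrite {1}(divn_eq x r) x_mod mulnC.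
Qed.

Lemma card_owned i : #|owned i| = p.
Proof.
rewrite card_imset ?card_ord // => t t' /(congr1 val) /= eq_t.
apply/val_inj/eqP; rewrite -(eqn_pmul2l (_ : 0 < r)); last by lia.
by rewrite -(eqn_add2r i) eq_t.
Qed.

Definition foreign (i : 'I_r) : {set 'I_(r * p)} := ~: owned i.

Lemma card_foreign i : #|foreign i| = r.-1 * p.
Proof. have := cardsC (owned i); rewrite card_owned card_ord -/(foreign i); nia. Qed.

Definition admissible i (T : {set 'I_(r * p)}) := (T \subset foreign i) && (p <= #|T|).

(* Inadmissible sets T are replaced by a fixed admissible one, so that every
   pair (t, T) can index a vertex. *)
Definition tail_set i T := if admissible i T then T else foreign i.

Lemma tail_set_foreign i T : tail_set i T \subset foreign i.
Proof. by rewrite /tail_set; case: ifP => [/andP[] | _]. Qed.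

Lemma card_tail_set i T : p <= #|tail_set i T|.
Proof. rewrite /tail_set; case: ifP => [/andP[] // | _]; rewrite card_foreign; nia. Qed.

Definition tail i T : seq nat := take p [seq val x | x <- enum (tail_set i T)].

Lemma mem_tail i T y :
  y \in tail i T -> exists2 x : 'I_(r * p), x \in tail_set i T & y = x.
Proof. by move/mem_take/mapP => [x]; rewrite mem_enum; exists x. Qed.

Lemma size_tail i T : size (tail i T) = p.
Proof. by rewrite size_takel // size_map -cardE card_tail_set. Qed.

Lemma uniq_tail i T : uniq (tail i T).
Proof. by rewrite take_uniq // map_inj_uniq ?enum_uniq //; apply: val_inj. Qed.

Definition vertex_data := ('I_p * {set 'I_(r * p)})%type.

Definition part_sizes : 'I_r -> nat := fun=> #|{: vertex_data}|.

Local Notation vertex := (cmp_vertex part_sizes).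

Definition data (v : vertex) : vertex_data := enum_val (tagged v).

Definition mk_vertex (i : 'I_r) (d : vertex_data) : vertex :=
  existT (fun i => 'I_(part_sizes i)) i (enum_rank d).

Lemma data_mk_vertex i d : data (mk_vertex i d) = d.
Proof. exact: enum_rankK. Qed.

Definition home_color (v : vertex) : nat := owned_color (tag v) (data v).1.

Definition lists (v : vertex) : seq nat := home_color v :: tail (tag v) (data v).2.

Lemma lists_k_list : k_list_assignment p.+1 lists.
Proof.
move=> v; rewrite /= size_tail uniq_tail andbT; split=> //.
apply/negP => /mem_tail [x /(subsetP (tail_set_foreign _ _)) + home_x].
by rewrite inE mem_owned -home_x /home_color owned_color_mod eqxx.
Qed.

Lemma home_color_coloring : L_coloring (@cmp_adj r part_sizes) lists home_color.
Proof.
split=> [v | u v]; first exact: mem_head.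
by apply: contraNneq => /(congr1 (modn^~ r)); rewrite !owned_color_mod => /val_inj ->.
Qed.

Section Uniqueness.

Variable c : vertex -> nat.
Hypothesis c_coloring : L_coloring (@cmp_adj r part_sizes) lists c.

Definition used i : {set 'I_(r * p)} :=
  [set x : 'I_(r * p) | [exists v, (tag v == i) && (c v == x)]].

Lemma usedP i (x : 'I_(r * p)) : reflect (exists2 v, tag v = i & c v = x) (x \in used i).
Proof.
rewrite inE; apply: (iffP existsP) => [[v /andP[/eqP vi /eqP vx]] | [v vi vx]].
  by exists v.
by exists v; rewrite vi vx !eqxx.
Qed.

Lemma used_color v (x : 'I_(r * p)) : c v = x -> x \in used (tag v).
Proof. by move=> cvx; apply/usedP; exists v. Qed.

Lemma used_disjoint i j : i != j -> [disjoint used i & used j].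
Proof.
move=> ij; apply/pred0P => x /=; apply/andP => -[/usedP[u ui ux] /usedP[v vj vx]].
have := c_coloring.2 u v; rewrite /cmp_adj ui vj ij ux vx eqxx.
by move/(_ isT).
Qed.

Lemma card_used_gt i : ~~ (owned i \subset used i) -> p < #|used i|.
Proof.
(* The vertex of part i with data (t, foreign i :\: used i) has no usable colour. *)
case/subsetPn => x /imsetP[t _ ->] t_unused; rewrite ltnNge; apply/negP => used_le.
have T_adm : admissible i (foreign i :\: used i).
  rewrite /admissible subsetDl cardsD card_foreign.
  have : #|foreign i :&: used i| <= #|used i| by apply/subset_leq_card/subsetIr.
  nia.
have := c_coloring.1 (mk_vertex i (t, foreign i :\: used i)).
rewrite /lists /home_color /= data_mk_vertex /= in_cons.
case/orP => [/eqP c_home | /mem_tail[y]].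
  by case/negP: t_unused; exact: (@used_color _ (owned_color i t) c_home).
rewrite /tail_set T_adm in_setD => /andP[y_unused _] c_y.
by case/negP: y_unused; exact: (@used_color _ y c_y).
Qed.

Lemma owned_sub_used i : owned i \subset used i.
Proof.
apply/negPn/negP => /card_used_gt used_gt.
have used_ge j : p <= #|used j|.
  have [/subset_leq_card | /card_used_gt /ltnW //] := boolP (owned j \subset used j).
  by rewrite card_owned.
have sum_gt : r * p < \sum_j #|used j|.
  rewrite -{1}(card_ord r) -sum_nat_const (bigD1 i) //= [X in _ < X](bigD1 i) //=.
  by rewrite -addSn; apply: leq_add => //; apply: leq_sum.
by have := leq_sum_card_disjoint used_disjoint; rewrite card_ord leqNgt sum_gt.
Qed.

Lemma coloring_home v : c v = home_color v.
Proof.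
have := c_coloring.1 v; rewrite in_cons => /orP[/eqP // | /mem_tail[y y_tail c_y]].
have := subsetP (tail_set_foreign _ _) _ y_tail; rewrite inE mem_owned => y_not_home.
have y_mod : y %% r < r by rewrite ltn_mod; lia.
have y_owner : y \in used (Ordinal y_mod).
  by apply: (subsetP (owned_sub_used _)); rewrite mem_owned.
have tag_ne : tag v != Ordinal y_mod by apply: contraNneq y_not_home => ->.
by have := disjointFl (used_disjoint tag_ne) y_owner; rewrite (@used_color v y c_y).
Qed.

End Uniqueness.

Lemma uniquely_list_colorable_cmp :
  uniquely_k_list_colorable (@cmp_adj r part_sizes) p.+1.
Proof.
exists lists; split; first exact: lists_k_list.
exists home_color; split; first exact: home_color_coloring.
by move=> c c_col v; apply: coloring_home.
Qed.

End Construction.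

Theorem theorem3p1 :
  forall k : nat, 2 <= k ->
  exists n : 'I_3 -> nat,
    (forall i, 0 < n i) /\
    uniquely_k_list_colorable (@cmp_adj 3 n) k.
Proof.
move=> k k_ge2; have p_gt0 : 0 < k.-1 by rewrite -ltnS (ltn_predK k_ge2).
exists (@part_sizes 3 k.-1); split.
  by move=> i; apply/card_gt0P; exists (Ordinal p_gt0, set0).
by rewrite -[k](ltn_predK k_ge2); apply: uniquely_list_colorable_cmp.
Qed.
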